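(* Let $\vec{\mathcal G}$ be an ergodic graph of a deterministic two-player mean-payoff game and suppose $r\in\mathcal P^{\sigma,\tau}$ for some $(\sigma,\tau)\in\Xi$. Then for every edge $(i,j)\in E$ not used by $(\sigma,\tau)$ (i.e. $i\in V_{\max}$ and $j\ne\sigma(i)$, or $i\in V_{\min}$ and $j\ne\tau(i)$), $$Z_{ij}=\lambda^{\sigma,\tau}(r)+u^{\sigma,\tau}_i(r)-u^{\sigma,\tau}_j(r).$$
   Context: Setting: directed graph $\vec{\mathcal G}=([n],E)$ without multiple edges, each vertex having an outgoing edge, $[n]=V_{\max}\uplus V_{\min}$, weights $r\in\mathbb R^E$; $(x,r_{-ij})$ is $r$ with coordinate $ij$ replaced by $x$. Ergodic equation in $(\lambda,u)$: $\lambda+u_i=\max_{(i,j)\in E}\{r_{ij}+u_j\}$ ($i\in V_{\max}$), $\lambda+u_i=\min_{(i,j)\in E}\{r_{ij}+u_j\}$ ($i\in V_{\min}$); $u$ is a bias if $(\lambda,u)$ solves it; ergodic graph: solvable for every $r$. A pair of policies $(\sigma,\tau)$ is bias-induced if some bias makes every $\sigma(i)$ attain the max and every $\tau(i)$ attain the min. $\vec{\mathcal G}^{\sigma,\tau}$ keeps at each vertex only its chosen edge; $\Xi$: pairs for which it has exactly one directed cycle. For $(\sigma,\tau)\in\Xi$, $\lambda^{\sigma,\tau}(r)$ is the mean weight of that cycle and $u^{\sigma,\tau}(r)_l$ is the total weight, for edge weights $r_{ij}-\lambda^{\sigma,\tau}(r)$, of the path in $\vec{\mathcal G}^{\sigma,\tau}$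 from $l$ to the smallest-index vertex on the cycle. $\mathcal P^{\sigma,\tau}$: set of $r$ for which $(\sigma,\tau)$ is the only bias-induced pair; $\mathcal U=\bigcup_{\Xi}\mathcal P^{\sigma,\tau}$. For $i\in V_{\min}$: $Z_{ij}=\inf\{x: (x,r_{-ij})\in\mathcal U$ and the game with weights $(x,r_{-ij})$ has a bias-induced pair $(\sigma',\tau')\in\Xi$ with $\tau'(i)\ne j\}$; for $i\in V_{\max}$: $Z_{ij}=\sup\{x: (x,r_{-ij})\in\mathcal U$ and the game with weights $(x,r_{-ij})$ has a bias-induced pair $(\sigma',\tau')\in\Xi$ with $\sigma'(i)\ne j\}$. *)

From HB Require Import structures.
From mathcomp Require Import all_boot all_order all_algebra.
From mathcomp Require Import classical_sets reals constructive_ereal ereal.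
Set Implicit Arguments. Unset Strict Implicit. Unset Printing Implicit Defensive.
Import Order.TTheory GRing.Theory Num.Theory.
Local Open Scope ring_scope.

(* Game graph: vertices 'I_n, edge relation E (no multiple edges),
   Vmax : {set 'I_n} (Vmin is its complement), weights r : 'I_n -> 'I_n -> R
   (only the values on edges are ever used).
   A pair of policies (sigma, tau) is encoded as a single map p : 'I_n -> 'I_n
   with p i = sigma i for i in Vmax and p i = tau i for i in Vmin. *)

Section Game.
Variables (R : realType) (n : nat) (E : rel 'I_n) (Vmax : {set 'I_n}).

Definition upd (r : 'I_n -> 'I_n -> R) (i j : 'I_n) (x : R) : 'I_n -> 'I_n -> R :=
  fun a b => if (a == i) && (b == j) then x else r a b.

Definition ergodic_sol (r : 'I_n -> 'I_n -> R) (lam : R) (u : 'I_n -> R) : Prop :=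
  forall i : 'I_n,
    (exists2 j, E i j & lam + u i = r i j + u j) /\
    (forall j, E i j ->
       if i \in Vmax then r i j + u j <= lam + u i else lam + u i <= r i j + u j).

Definition is_bias (r : 'I_n -> 'I_n -> R) (u : 'I_n -> R) : Prop :=
  exists lam, ergodic_sol r lam u.

Definition ergodic_graph : Prop :=
  forall r : 'I_n -> 'I_n -> R, exists lam u, ergodic_sol r lam u.

Definition policy (p : 'I_n -> 'I_n) : Prop := forall i, E i (p i).

Definition bias_induced (r : 'I_n -> 'I_n -> R) (p : 'I_n -> 'I_n) : Prop :=
  policy p /\ exists lam u, ergodic_sol r lam u /\
    forall i, lam + u i = r i (p i) + u (p i).

(* directed cycles of the out-degree-one graph G^{sigma,tau}:
   vertex sets of orbits of periodic vertices *)
Definition periodic (p : 'I_n -> 'I_n) : {set 'I_n} :=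
  [set x | fconnect p (p x) x].
Definition cycles (p : 'I_n -> 'I_n) : {set {set 'I_n}} :=
  [set [set y | fconnect p x y] | x in periodic p].

Definition Xi (p : 'I_n -> 'I_n) : Prop := policy p /\ #|cycles p| = 1%N.

Definition lam_pol (p : 'I_n -> 'I_n) (r : 'I_n -> 'I_n -> R) : R :=
  (\sum_(c in periodic p) r c (p c)) / #|periodic p|%:R.

Definition cyc_min (p : 'I_n -> 'I_n) : option 'I_n :=
  [pick x in periodic p | [forall y in periodic p, (x <= y)%N]].

Definition u_pol (p : 'I_n -> 'I_n) (r : 'I_n -> 'I_n -> R) (l : 'I_n) : R :=
  match cyc_min p with
  | Some m => \sum_(k < findex p l m)
                (r (iter k p l) (iter k.+1 p l) - lam_pol p r)
  | None => 0
  end.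

Definition P_set (p : 'I_n -> 'I_n) (r : 'I_n -> 'I_n -> R) : Prop :=
  bias_induced r p /\ forall q, bias_induced r q -> forall i, q i = p i.

Definition U_set (r : 'I_n -> 'I_n -> R) : Prop :=
  exists p, Xi p /\ P_set p r.

Definition Zset (r : 'I_n -> 'I_n -> R) (i j : 'I_n) : set R :=
  [set x | U_set (upd r i j x) /\
     exists q, [/\ bias_induced (upd r i j x) q, Xi q & q i != j]].

Definition Z (r : 'I_n -> 'I_n -> R) (i j : 'I_n) : \bar R :=
  if i \in Vmax then ereal_sup [set x%:E | x in Zset r i j]
  else ereal_inf [set x%:E | x in Zset r i j].

End Game.

(* If (sigma, tau) is the only bias-induced pair, then for any of its biases
   (lam, u) every edge it does not use is strictly suboptimal:
   r_ij + u_j < lam + u_i at a max vertex, and dually at a min vertex.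
   Conversely, in a policy graph with a single cycle, a tight bias that is strict
   on all unused edges forces uniqueness: the difference of two biases is then
   constant, by comparing its maximum and minimum along the cycle.  Hence moving
   r_ij keeps (sigma, tau) the unique pair as long as (i, j) stays strictly
   suboptimal, i.e. on one side of lam + u_i - u_j; and any x in the set defining
   Z_ij lies weakly on the other side, for otherwise restoring r_ij would make the
   new unique pair unique for r as well, hence equal to (sigma, tau). *)

From HB Require Import structures.
From mathcomp Require Import all_boot all_order all_algebra.
From mathcomp Require Import classical_sets reals constructive_ereal ereal.
From mathcomp Require Import lra.
Set Implicit Arguments. Unset Strict Implicit.
Import Order.TTheory GRing.Theory Num.Theory.
Local Open Scope ring_scope.

Section FunctionalGraph.
Variables (n : nat) (p : 'I_n -> 'I_n).

Lemma periodicP a : reflect (exists k, iter k.+1 p a = a) (a \in periodic p).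
Proof.
rewrite inE; apply: (iffP idP) => [/iter_findex Ha | [k Ek]].
  by exists (findex p (p a) a); rewrite iterSr.
by rewrite -{2}Ek iterSr fconnect_iter.
Qed.

Lemma exists_iter_periodic s : exists k, iter k p s \in periodic p.
Proof.
have /trajectP [k lt_k Ek] := looping_order p s.
exists k; apply/periodicP; exists (order p s - k).-1.
by rewrite -iterD prednK ?subn_gt0 // subnK ?Ek // ltnW.
Qed.

Lemma periodic_closed a : a \in periodic p -> p a \in periodic p.
Proof. by case/periodicP => k Ek; apply/periodicP; exists k; rewrite -iterSr iterS Ek. Qed.

Lemma periodic_inj : {in periodic p &, injective p}.
Proof.
have iter_period a k m : iter k p a = a -> iter (k * m) p a = a.
  by move=> Ek; elim: m => [|m IHm]; rewrite ?muln0 // mulnS iterD IHm.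
move=> a b /periodicP [ka Ea] /periodicP [kb Eb] Epab.
rewrite -(iter_period _ _ kb.+1 Ea) -(iter_period _ _ ka.+1 Eb) mulnC.
by rewrite mulSn addSn !iterSr Epab.
Qed.

Lemma big_periodic_shift (V : zmodType) (F : 'I_n -> V) :
  \sum_(c in periodic p) F (p c) = \sum_(c in periodic p) F c.
Proof.
have Eimage : p @: periodic p = periodic p.
  apply/eqP; rewrite eqEcard card_in_imset ?leqnn ?andbT; last exact: periodic_inj.
  by apply/fintype.subsetP => _ /imsetP [a Ha ->]; exact: periodic_closed.
by rewrite -(big_imset F periodic_inj) Eimage.
Qed.

Lemma cyc_min_periodic (a : 'I_n) : exists2 m, cyc_min p = Some m & m \in periodic p.
Proof.
rewrite /cyc_min; case: pickP => [m /andP [Hm _] | Hnone]; first by exists m.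
have [k Hk] := exists_iter_periodic a.
case: (arg_minnP (fun x : 'I_n => val x) Hk) => m Hm Hmin.
by move: (Hnone m); rewrite /= (Hm : m \in periodic p) => /negbT/forall_inPn [y /Hmin ->].
Qed.

Variable E : rel 'I_n.
Hypothesis HXi : Xi E p.

Lemma Xi_periodic_exists : exists m, m \in periodic p.
Proof.
have /card_gt0P [_ /imsetP [m Hm _]] : (0 < #|cycles p|)%N by rewrite HXi.2.
by exists m.
Qed.

Lemma periodic_connect y z :
  y \in periodic p -> z \in periodic p -> fconnect p y z.
Proof.
move=> Hy Hz; have [C HC] := cards1P (introT eqP HXi.2).
have : [set w | fconnect p y w] \in cycles p by exact: imset_f.
have : [set w | fconnect p z w] \in cycles p by exact: imset_f.
rewrite HC !inE => /eqP Ez /eqP Ey.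
have : z \in [set w | fconnect p z w] by rewrite inE connect0.
by rewrite Ez -Ey inE.
Qed.

Lemma connect_periodic l m : m \in periodic p -> fconnect p l m.
Proof.
have [k Hk] := exists_iter_periodic l.
move=> Hm; exact: connect_trans (fconnect_iter _ _ _) (periodic_connect Hk Hm).
Qed.

Lemma closed_periodic (P : pred 'I_n) s :
  (forall l, P l -> P (p l)) -> P s -> {subset periodic p <= P}.
Proof.
move=> closedP Ps m Hm.
have iterP k t : P t -> P (iter k p t) by elim: k => //= k IHk /IHk; exact: closedP.
by rewrite -(iter_findex (connect_periodic s Hm)); exact: iterP.
Qed.

End FunctionalGraph.

Section Sandwich.
Variables (R : realType) (n : nat) (E : rel 'I_n) (p q : 'I_n -> 'I_n).
Variables (d : 'I_n -> R) (c : R).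
Hypothesis HXi : Xi E p.
Hypothesis d_between : forall l,
  d (p l) <= c + d l /\ c + d l <= d (q l) \/
  d (q l) <= c + d l /\ c + d l <= d (p l).
Hypothesis d_strict : forall l, q l != p l -> d (q l) != c + d l.

Let at_q_or_p l : q l = p l \/ d (q l) < c + d l \/ c + d l < d (q l).
Proof.
by case: (eqVneq (q l) (p l)) => [|/d_strict]; [left | rewrite neq_lt => /orP; right].
Qed.

(* Once c = 0, the sets where d is maximal and minimal are p-closed, so both
   contain the cycle and d is constant. *)
Lemma sandwiched_policy_eq : q =1 p.
Proof.
have [m0 Hm0] := Xi_periodic_exists HXi.
have [k1 d_max] : exists k1, forall l, d l <= d k1.
  by case: (@arg_maxP _ _ _ m0 xpredT d isT) => k1 _ Hk1; exists k1 => l; exact: Hk1.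
have [k2 d_min] : exists k2, forall l, d k2 <= d l.
  by case: (@arg_minP _ _ _ m0 xpredT d isT) => k2 _ Hk2; exists k2 => l; exact: Hk2.
have c0 : c = 0.
  have := d_between k1; have := d_between k2.
  have := d_max (p k1); have := d_max (q k1).
  have := d_min (p k2); have := d_min (q k2).
  lra.
have max_closed l : d l == d k1 -> d (p l) == d k1.
  move=> /eqP Hl; apply/eqP; have := d_between l.
  have := d_max (p l); have := d_max (q l).
  by case: (at_q_or_p l) => [-> | ?]; lra.
have min_closed l : d l == d k2 -> d (p l) == d k2.
  move=> /eqP Hl; apply/eqP; have := d_between l.
  have := d_min (p l); have := d_min (q l).
  by case: (at_q_or_p l) => [-> | ?]; lra.
have /eqP max_m0 := closed_periodic HXi max_closed (eqxx (d k1)) Hm0.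
have /eqP min_m0 := closed_periodic HXi min_closed (eqxx (d k2)) Hm0.
have d_const l : d l = d k1.
  by have := d_max l; have := d_min l; lra.
by move=> l; case: (at_q_or_p l) => //; rewrite !d_const c0 => ?; exfalso; lra.
Qed.

End Sandwich.

Section ExtendedRealBounds.
Variables (R : realType) (S : set R) (t : R).

Lemma ereal_sup_EFin_eq :
  (forall x, x < t -> S x) -> (forall x, S x -> x <= t) ->
  ereal_sup [set x%:E | x in S] = t%:E.
Proof.
move=> lower upper; apply/eqP; rewrite eq_le; apply/andP; split.
  by apply: ge_ereal_sup => _ [x Sx <-]; rewrite lee_fin; exact: upper.
apply/lee_subgt0Pr => e e0; apply: ereal_sup_ubound.
by exists (t - e); [apply: lower; lra | rewrite EFinB].
Qed.

Lemma ereal_inf_EFin_eq :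
  (forall x, t < x -> S x) -> (forall x, S x -> t <= x) ->
  ereal_inf [set x%:E | x in S] = t%:E.
Proof.
move=> upper lower; apply/eqP; rewrite eq_le; apply/andP; split.
  apply/lee_addgt0Pr => e e0; apply: ereal_inf_lbound.
  by exists (t + e); [apply: upper; lra | rewrite EFinD].
by apply: le_ereal_inf_tmp => _ [x Sx <-]; rewrite lee_fin; exact: lower.
Qed.

End ExtendedRealBounds.

Section Game.
Variables (R : realType) (n : nat) (E : rel 'I_n) (Vmax : {set 'I_n}).
Implicit Types (p : 'I_n -> 'I_n) (w : 'I_n -> 'I_n -> R) (u : 'I_n -> R).

Definition tight p w (lam : R) u := forall l, lam + u l = w l (p l) + u (p l).

Definition crit p w (i j : 'I_n) : R := lam_pol p w + u_pol p w i - u_pol p w j.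

Lemma lam_pol_tight p w lam u : Xi E p -> tight p w lam u -> lam_pol p w = lam.
Proof.
move=> HXi Hu; have [m Hm] := Xi_periodic_exists HXi.
rewrite /lam_pol (eq_bigr (fun c => lam + (u c - u (p c)))); last first.
  by move=> c _; have := Hu c; lra.
rewrite big_split /= sumrB [X in _ - X]big_periodic_shift subrr addr0 sumr_const.
rewrite -[lam *+ _]mulr_natr mulfK //.
by rewrite pnatr_eq0 -lt0n; apply/card_gt0P; exists m.
Qed.

Lemma u_pol_sub_tight p w lam u : Xi E p -> tight p w lam u ->
  forall a b, u_pol p w a - u_pol p w b = u a - u b.
Proof.
move=> HXi Hu; have [m0 _] := Xi_periodic_exists HXi.
have [m Hcm Hm] := cyc_min_periodic p m0.
suff u_polE a : u_pol p w a = u a - u m by move=> a b; rewrite !u_polE; lra.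
rewrite /u_pol Hcm (lam_pol_tight HXi Hu).
transitivity (- \sum_(0 <= k < findex p a m) (u (iter k.+1 p a) - u (iter k p a))).
  rewrite -sumrN big_mkord; apply: eq_bigr => k _.
  by rewrite iterS; have := Hu (iter k p a); lra.
rewrite telescope_sumr // iter_findex ?opprB //; exact (connect_periodic HXi a Hm).
Qed.

Lemma crit_tight p w lam u i j : Xi E p -> tight p w lam u ->
  crit p w i j = lam + u i - u j.
Proof.
move=> HXi Hu.
by rewrite /crit (lam_pol_tight HXi Hu) -addrA (u_pol_sub_tight HXi Hu) addrA.
Qed.

Lemma crit_ext p w w' : (forall l, w l (p l) = w' l (p l)) -> crit p w =2 crit p w'.
Proof.
move=> Ew.
have El : lam_pol p w = lam_pol p w'.
  by rewrite /lam_pol; congr (_ / _); apply: eq_bigr => c _; rewrite Ew.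
have Eu a : u_pol p w a = u_pol p w' a.
  by rewrite /u_pol; case: cyc_min => // m; apply: eq_bigr => k _; rewrite El iterS Ew.
by move=> i j; rewrite /crit El !Eu.
Qed.

Definition worse (i : 'I_n) (x y : R) : bool :=
  if i \in Vmax then x < y else y < x.

Definition strict_bias p w lam u :=
  forall l e, E l e -> e != p l -> worse l (w l e + u e) (lam + u l).

Lemma P_set_strict p w lam u :
  P_set E Vmax p w -> ergodic_sol E Vmax w lam u -> tight p w lam u ->
  strict_bias p w lam u.
Proof.
move=> [[p_pol _] p_unique] Hsol Hu l e Hle Hne.
have Hweak := (Hsol l).2 e Hle.
suff Hneq : lam + u l != w l e + u e.
  rewrite /worse; case: ifP Hweak => _ Hweak.
    by rewrite lt_neqAle Hweak andbT eq_sym.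
  by rewrite lt_neqAle Hweak andbT.
apply/eqP => Heq; pose q v := if v == l then e else p v.
have q_bias : bias_induced E Vmax w q.
  split=> [v | ]; first by rewrite /q; case: eqP => [-> |].
  by exists lam, u; split=> // v; rewrite /q; case: eqP => [-> |].
by move: Hne; rewrite -(p_unique q q_bias l) /q eqxx eqxx.
Qed.

Lemma strict_P_set p w lam u : Xi E p ->
  ergodic_sol E Vmax w lam u -> tight p w lam u -> strict_bias p w lam u ->
  P_set E Vmax p w.
Proof.
move=> HXi Hsol Hu Hstrict; split; first by split; [exact: HXi.1 | exists lam, u].
move=> q [q_pol [lam' [u' [Hsol' Hu']]]].
apply: (sandwiched_policy_eq (d := u' \- u) (c := lam' - lam) HXi) => l /=.
  have := (Hsol l).2 (q l) (q_pol l); have := (Hsol' l).2 (p l) (HXi.1 l).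
  have := Hu l; have := Hu' l.
  by case: ifP => _; [left | right]; lra.
move=> /(Hstrict l (q l) (q_pol l)); rewrite /worse.
by have := Hu' l; case: ifP => _ ? ?; apply/eqP => ?; lra.
Qed.

Lemma upd_at w i j x : upd w i j x i j = x.
Proof. by rewrite /upd !eqxx. Qed.

Lemma upd_policy p w i j x l : p i != j -> upd w i j x l (p l) = w l (p l).
Proof.
move=> Hpij; rewrite /upd; case: andP => // [[/eqP El /eqP Ej]].
by rewrite -El Ej eqxx in Hpij.
Qed.

Lemma P_set_upd p w i j x : Xi E p -> P_set E Vmax p w -> p i != j ->
  worse i x (crit p w i j) -> P_set E Vmax p (upd w i j x).
Proof.
move=> HXi HP Hpij; have [[_ [lam [u [Hsol Hu]]]] _] := HP.
rewrite (crit_tight i j HXi Hu) => Hx.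
have Hu_upd : tight p (upd w i j x) lam u by move=> l; rewrite upd_policy.
have Hstrict := P_set_strict HP Hsol Hu.
apply: (strict_P_set HXi _ Hu_upd) => [l | l e Hle Hne].
  split=> [| e Hle]; first by exists (p l); [exact: HXi.1 | exact: Hu_upd].
  rewrite /upd; case: andP => [[/eqP -> /eqP ->] | _]; last exact: (Hsol l).2.
  by move: Hx; rewrite /worse; case: ifP => _; lra.
rewrite /upd; case: andP => [[/eqP -> /eqP ->] | _]; last exact: Hstrict.
by move: Hx; rewrite /worse; case: ifP => _; lra.
Qed.

Lemma P_set_worse_crit p w i j : Xi E p -> P_set E Vmax p w -> E i j -> p i != j ->
  worse i (w i j) (crit p w i j).
Proof.
move=> HXi HP Hij Hpij; have [[_ [lam [u [Hsol Hu]]]] _] := HP.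
have := P_set_strict HP Hsol Hu Hij; rewrite eq_sym => /(_ Hpij).
by rewrite (crit_tight i j HXi Hu) /worse; case: ifP => _; lra.
Qed.

Lemma upd_upd w i j x : upd (upd w i j x) i j (w i j) = w.
Proof.
apply: boolp.funext => a; apply: boolp.funext => b; rewrite /upd.
by case: andP => // [[/eqP -> /eqP ->]].
Qed.

Section CriticalValue.
Variables (r : 'I_n -> 'I_n -> R) (p : 'I_n -> 'I_n) (i j : 'I_n).
Hypotheses (HXi : Xi E p) (HP : P_set E Vmax p r) (Hij : E i j) (Hpij : p i != j).

Lemma Zset_worse x : worse i x (crit p r i j) -> Zset E Vmax r i j x.
Proof.
move=> /(P_set_upd HXi HP Hpij) HPx.
by split; [exists p | exists p; split; first exact: HPx.1].
Qed.

Lemma Zset_not_worse x : Zset E Vmax r i j x -> ~~ worse i (crit p r i j) x.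
Proof.
move=> [[p' [HXi' HP']] [q [q_bias _ Hqij]]].
have Hp'ij : p' i != j by rewrite -(HP'.2 q q_bias).
have := P_set_worse_crit HXi' HP' Hij Hp'ij; rewrite upd_at.
set th' := crit p' (upd r i j x) i j => worse_x.
have worse_r := P_set_worse_crit HXi HP Hij Hpij.
apply/negP => worse_th.
have [worse_r' | ] := boolP (worse i (r i j) th').
  have := P_set_upd HXi' HP' Hp'ij worse_r'; rewrite upd_upd => HP'r.
  have Ep' : p' = p := boolp.funext (HP.2 p' HP'r.1).
  have Eth : th' = crit p r i j.
    by rewrite /th' Ep' (crit_ext (w' := r)) // => l; rewrite upd_policy.
  by move: worse_x worse_th; rewrite Eth /worse; case: ifP => _; lra.
by move: worse_r worse_x worse_th; rewrite /worse; case: ifP => _; rewrite -leNgt; lra.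
Qed.

End CriticalValue.

End Game.

Unset Implicit Arguments.

Theorem mainTheorem13 (R : realType) (n : nat) (E : rel 'I_n) (Vmax : {set 'I_n})
  (Hout : forall i : 'I_n, exists j, E i j)
  (Herg : ergodic_graph R E Vmax)
  (r : 'I_n -> 'I_n -> R) (p : 'I_n -> 'I_n)
  (HXi : Xi E p) (HP : P_set E Vmax p r)
  (i j : 'I_n) (Hij : E i j) (Hnot : p i != j) :
  Z E Vmax r i j = (lam_pol p r + u_pol p r i - u_pol p r j)%:E.
Proof.
have lower := Zset_worse HXi HP Hnot.
have upper := Zset_not_worse HXi HP Hij Hnot.
rewrite /Z; move: lower upper; rewrite /worse; case: ifP => _ lower upper.
  by apply: ereal_sup_EFin_eq => // x /upper; rewrite leNgt.
by apply: ereal_inf_EFin_eq => // x /upper; rewrite leNgt.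
Qed.
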